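(* Fix a day $d_i$ in a run of the online greedy algorithm on an instance of Model 1, and let $H_i$ be the weighted bipartite graph with category capacities $b'_{i,k}$ constructed on that day. Then any maximum-weight $b$-matching in $H_i$ among those of size at most $s_i$ is also a maximum-size $b$-matching in $H_i$ among those of size at most $s_i$.
   Context: Model 1: finite sets of agents $A$, categories $C$ and days $D=\{d_1,\dots,d_T\}$; each agent is eligible for a subset of categories; daily supply $s_i$ for day $d_i$; daily quota $q_{ik}$ for category $c_k$ on day $d_i$; each agent $a_j$ has a priority factor $\alpha_j>0$ and a set of available days; discount factor $\delta\in(0,1)$. In the online greedy algorithm, on day $d_i$ the set $A_i$ consists of the agents available on $d_i$ and not yet allocated on earlier days; $H_i$ is the bipartite graph with parts $A_i$ and $C$, with an edge $(a_j,c_k)$ whenever $a_j$ is eligible for $c_k$, of weight $w_i(a_j,c_k)=\alpha_j\delta^{i-1}$; each agent has capacity $1$ and category $c_k$ has capacity $b'_{i,k}=q_{ik}$. A $b$-matching is a set of edges in which each vertex is incident to at most its capacity many edges; its size is its number of edges and its weight is the sum of edge weights. *)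

From HB Require Import structures.
From mathcomp Require Import all_boot all_order all_algebra.
Set Implicit Arguments. Unset Strict Implicit. Unset Printing Implicit Defensive.
Import Order.TTheory GRing.Theory Num.Theory.
Local Open Scope ring_scope.

Section Model1.
Variables (R : realFieldType) (Agent Cat : finType) (T : nat).
Variable eligible : Agent -> Cat -> bool.
Variable quota : 'I_T -> Cat -> nat.
Variable alpha : Agent -> R.
Variable avail : Agent -> 'I_T -> bool.
Variable delta : R.

(* Day d_i is represented by i : 'I_T (0-based, so d_i = d_{i+1} in the paper).
   prev = set of agents allocated on days before d_i. *)
Definition day_agents (prev : {set Agent}) (i : 'I_T) : {set Agent} :=
  [set a | avail a i & a \notin prev].

Definition is_edge (prev : {set Agent}) (i : 'I_T) (e : Agent * Cat) : bool :=
  (e.1 \in day_agents prev i) && eligible e.1 e.2.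

(* w_i(a_j, c_k) = alpha_j * delta^(i-1)  (paper 1-based day index). *)
Definition edge_weight (i : 'I_T) (e : Agent * Cat) : R :=
  alpha e.1 * delta ^+ (val i).

(* b-matching in H_i: agent capacity 1, category capacity b'_{i,k} = q_{ik}. *)
Definition is_bmatching (prev : {set Agent}) (i : 'I_T) (M : {set Agent * Cat}) : bool :=
  [&& [forall e in M, is_edge prev i e],
      [forall a : Agent, #|[set e in M | e.1 == a]| <= 1]%N &
      [forall c : Cat, #|[set e in M | e.2 == c]| <= quota i c]%N].

Definition bm_weight (i : 'I_T) (M : {set Agent * Cat}) : R :=
  \sum_(e in M) edge_weight i e.

Definition feasible (prev : {set Agent}) (i : 'I_T) (s : nat) (M : {set Agent * Cat}) : bool :=
  is_bmatching prev i M && (#|M| <= s)%N.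

Definition max_weight (prev : {set Agent}) (i : 'I_T) (s : nat) (M : {set Agent * Cat}) : Prop :=
  feasible prev i s M /\
  forall M' : {set Agent * Cat}, feasible prev i s M' -> bm_weight i M' <= bm_weight i M.

Definition max_size (prev : {set Agent}) (i : 'I_T) (s : nat) (M : {set Agent * Cat}) : Prop :=
  feasible prev i s M /\
  forall M' : {set Agent * Cat}, feasible prev i s M' -> (#|M'| <= #|M|)%N.
End Model1.

(* Every edge at agent a_j has the same weight alpha_j delta^(i-1) > 0, so the
   weight of a b-matching is the total weight of the set of agents it matches.
   These agent sets behave like the independent sets of a matroid: by
   repeatedly swapping one edge, a b-matching M' larger than M can be turned
   into a b-matching of the same size as M' that still matches every agent of
   M.  If a maximum-weight M were not of maximum size, this would produce a
   feasible b-matching matching a strict superset of M's agents, hence of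
   larger weight. *)

From HB Require Import structures.
From mathcomp Require Import all_boot all_order all_algebra zify.
Import Order.TTheory GRing.Theory Num.Theory.
Set Implicit Arguments. Unset Strict Implicit. Unset Printing Implicit Defensive.

Lemma card_fibre_sum (T : finType) (U : eqType) (f : T -> U) (N : {set T}) u :
  #|[set e in N | f e == u]| = \sum_(e in N) (f e == u).
Proof.
rewrite -sum1_card (eq_bigl (fun e => (e \in N) && (f e == u))) => [|e]; last first.
  by rewrite inE.
by rewrite big_mkcondr; apply: eq_bigr => e _; case: eqP.
Qed.

Lemma card_fibre_exchange (T : finType) (U : eqType) (f : T -> U) (M : {set T}) x y u :
  x \in M -> y \notin M ->
  #|[set e in y |: (M :\ x) | f e == u]| + (f x == u) =
  #|[set e in M | f e == u]| + (f y == u).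
Proof.
move=> xM yM; rewrite !card_fibre_sum big_setU1 /=; last by rewrite inE negb_and yM orbT.
by rewrite (big_setD1 x xM) /=; lia.
Qed.

Lemma card_fibre_exchange_le (T : finType) (U : eqType) (f : T -> U) (M : {set T}) x y u :
  x \in M -> y \notin M ->
  #|[set e in y |: (M :\ x) | f e == u]| <= #|[set e in M | f e == u]| + (f y == u).
Proof. by move=> xM yM; rewrite -(card_fibre_exchange f u xM yM) leq_addr. Qed.

Lemma card_fibre_exchange_eq (T : finType) (U : eqType) (f : T -> U) (M : {set T}) x y u :
  x \in M -> y \notin M -> f x = f y ->
  #|[set e in y |: (M :\ x) | f e == u]| = #|[set e in M | f e == u]|.
Proof.
by move=> xM yM fxy; apply/eqP; rewrite -(eqn_add2r (f x == u)) card_fibre_exchange ?fxy.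
Qed.

Lemma card_exchange (T : finType) (M : {set T}) x y :
  x \in M -> y \notin M -> #|y |: (M :\ x)| = #|M|.
Proof.
move=> xM yM; rewrite cardsU1 inE negb_and yM orbT /=.
by rewrite (cardsD1 x M) xM.
Qed.

Lemma ltr_sum_proper (R : numDomainType) (I : finType) (F : I -> R) (A B : {set I}) :
  (forall i, 0 < F i)%R -> A \proper B -> (\sum_(i in A) F i < \sum_(i in B) F i)%R.
Proof.
move=> F_gt0 /properP[AB [b bB bA]].
rewrite [X in (_ < X)%R](big_setID A) /= (setIidPr AB) ltrDl (bigD1 b) /=; last by rewrite !inE bA.
by rewrite ltr_wpDr ?sumr_ge0 // => i _; apply: ltW.
Qed.

Section BMatchings.
Variables (A C : finType) (E : pred (A * C)) (q : C -> nat).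

Definition bmatching (M : {set A * C}) : bool :=
  [&& [forall e in M, E e],
      [forall a : A, #|[set e in M | e.1 == a]| <= 1] &
      [forall c : C, #|[set e in M | e.2 == c]| <= q c]].

Definition matched (M : {set A * C}) : {set A} := [set e.1 | e in M].

Lemma bmatching_fst_inj M : bmatching M -> {in M &, injective fst}.
Proof.
case/and3P=> _ /forallP agent_cap _ x y xM yM xy.
have /card_le1_eqP := agent_cap x.1; apply; by rewrite inE ?xM ?yM ?xy /=.
Qed.

Lemma card_matched M : bmatching M -> #|matched M| = #|M|.
Proof. by move/bmatching_fst_inj/card_in_imset. Qed.

Lemma exists_unmatched_agent M M' :
  bmatching M -> bmatching M' -> #|M| < #|M'| ->
  exists2 x, x \in M' & x.1 \notin matched M.
Proof.
move=> hM hM' lt_MM'; apply/exists_inP; apply: contraLR lt_MM'.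
rewrite negb_exists_in -leqNgt -(card_matched hM) -(card_matched hM') => /forall_inP sub.
apply: subset_leq_card; apply/subsetP=> _ /imsetP[x xM' ->].
by have := sub x xM'; rewrite negbK.
Qed.

Lemma bmatching_exchange M x y :
  bmatching M -> x \in M -> E y -> y.1 \notin matched M ->
  (#|[set e in M | e.2 == y.2]| < q y.2) || (x.2 == y.2) ->
  bmatching (y |: (M :\ x)).
Proof.
case/and3P=> /forall_inP ME /forallP agent_cap /forallP cat_cap xM Ey yM1 room.
have yM : y \notin M by apply: contra yM1 => yM; apply: imset_f.
apply/and3P; split.
- by apply/forall_inP=> e; rewrite !inE => /predU1P[-> // | /andP[_ /ME]].
- apply/forallP=> a; apply: leq_trans (card_fibre_exchange_le fst a xM yM) _ => /=.
  case: (eqVneq y.1 a) => [<- | _]; last by rewrite addn0.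
  suff -> : #|[set e in M | e.1 == y.1]| = 0 by [].
  apply/eqP; rewrite cards_eq0; apply/eqP/setP=> e; rewrite !inE.
  by apply: contraNF yM1 => /andP[eM /eqP <-]; apply: imset_f.
- apply/forallP=> c; case/orP: room => [slack | /eqP xy2].
    apply: leq_trans (card_fibre_exchange_le snd c xM yM) _ => /=.
    by case: (eqVneq y.2 c) => [<- | _]; rewrite ?addn1 ?addn0 ?cat_cap.
  by rewrite (card_fibre_exchange_eq (f := snd) c xM yM xy2) cat_cap.
Qed.

Lemma exists_exchange_partner M M' y :
  bmatching M -> bmatching M' -> #|M| < #|M'| -> y \in M -> y \notin M' ->
  exists2 x, x \in M' :\: M &
    (#|[set e in M' | e.2 == y.2]| < q y.2) || (x.2 == y.2).
Proof.
move=> hM hM' lt_MM' yM yM'.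
have [slack | full] := boolP (#|[set e in M' | e.2 == y.2]| < q y.2).
  have [x xM' xM1] := exists_unmatched_agent hM hM' lt_MM'.
  exists x => //; rewrite inE xM' andbT.
  by apply: contra xM1 => xM; apply: imset_f.
have [x] : exists2 x, x \in [set e in M' | e.2 == y.2] & x \notin M.
  apply/exists_inP; apply: contraR full; rewrite negb_exists_in => /forall_inP sub.
  case/and3P: hM => _ _ /forallP cat_cap; apply: leq_trans (cat_cap y.2).
  apply: proper_card; apply/properP; split; last by exists y; rewrite !inE ?yM ?(negbTE yM') ?eqxx.
  apply/subsetP=> e eM'; have := sub e eM'; rewrite negbK => eM.
  by move: eM'; rewrite !inE eM => /andP[_ ->].
by rewrite inE => /andP[xM' xy2] xM; exists x; rewrite ?inE ?xM ?xM' /=.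
Qed.

Lemma bmatching_exchange_step M M' :
  bmatching M -> bmatching M' -> #|M| < #|M'| -> ~~ (matched M \subset matched M') ->
  exists M1, [/\ bmatching M1, #|M1| = #|M'| & #|M :\: M1| < #|M :\: M'|].
Proof.
move=> hM hM' lt_MM' /subsetPn[_ /imsetP[y yM ->] yM'1].
have yM' : y \notin M' by apply: contra yM'1 => yM'; apply: imset_f.
have [x /setDP[xM' xM] room] := exists_exchange_partner hM hM' lt_MM' yM yM'.
have Ey : E y by case/and3P: hM => /forall_inP ME _ _; apply: ME.
exists (y |: (M' :\ x)); split.
- exact: bmatching_exchange.
- exact: card_exchange.
apply: proper_card; apply/properP; split; last by exists y; rewrite !inE ?yM ?(negbTE yM') ?eqxx.
apply/subsetP=> e; rewrite !inE => /andP[eM1 eM]; rewrite eM andbT.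
apply: contra eM1 => eM'; rewrite eM' andbT.
by apply/orP; right; apply: contraNneq xM => <-.
Qed.

Lemma bmatching_augment M M' :
  bmatching M -> bmatching M' -> #|M| < #|M'| ->
  exists2 M'', bmatching M'' /\ #|M''| = #|M'| & matched M \subset matched M''.
Proof.
move=> hM; have [n] := ubnP #|M :\: M'|; elim: n M' => // n IH M' lt_n hM' lt_MM'.
have [sub | nsub] := boolP (matched M \subset matched M'); first by exists M'.
have [M1 [hM1 cardM1 lt1]] := bmatching_exchange_step hM hM' lt_MM' nsub.
have lt_n1 : #|M :\: M1| < n by apply: leq_trans lt1 _.
have lt_MM1 : #|M| < #|M1| by rewrite cardM1.
have [M'' [hM'' cardM''] sub] := IH M1 lt_n1 hM1 lt_MM1.
by exists M''; rewrite ?cardM'' ?cardM1.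
Qed.

Lemma sum_bmatching_matched (R : nmodType) (w : A -> R) M :
  bmatching M -> (\sum_(e in M) w e.1 = \sum_(a in matched M) w a)%R.
Proof. by move/bmatching_fst_inj=> inj; rewrite big_imset. Qed.

Theorem bmatching_max_weight_max_size (R : numDomainType) (w : A -> R) s M :
  (forall a, 0 < w a)%R -> bmatching M ->
  (forall M', bmatching M' -> #|M'| <= s -> (\sum_(e in M') w e.1 <= \sum_(e in M) w e.1)%R) ->
  forall M', bmatching M' -> #|M'| <= s -> #|M'| <= #|M|.
Proof.
move=> w_gt0 hM Mmax M' hM' M's; rewrite leqNgt; apply/negP=> lt_MM'.
have [M'' [hM'' cardM''] sub] := bmatching_augment hM hM' lt_MM'.
have M''s : #|M''| <= s by rewrite cardM''.
have := Mmax M'' hM'' M''s; apply/negP; rewrite lt_geF //.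
rewrite !sum_bmatching_matched //; apply: ltr_sum_proper => //.
by rewrite properEcard sub !card_matched ?cardM''.
Qed.

End BMatchings.

Local Open Scope ring_scope.

Theorem lemma1 (R : realFieldType) (Agent Cat : finType) (T : nat)
  (eligible : Agent -> Cat -> bool) (supply : 'I_T -> nat)
  (quota : 'I_T -> Cat -> nat) (alpha : Agent -> R)
  (avail : Agent -> 'I_T -> bool) (delta : R)
  (halpha : forall a, 0 < alpha a) (hdelta : 0 < delta < 1)
  (prev : {set Agent}) (i : 'I_T) (M : {set Agent * Cat}) :
  max_weight eligible quota alpha avail delta prev i (supply i) M ->
  max_size eligible quota avail prev i (supply i) M.
Proof.
case=> /andP[hM Ms] Mmax; split=> [|M' /andP[hM' M's]]; first by rewrite /feasible hM.
apply: (bmatching_max_weight_max_size (w := fun a => alpha a * delta ^+ i)) hM _ _ hM' M's.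
- by move=> a; case/andP: hdelta => delta_gt0 _; rewrite mulr_gt0 ?halpha ?exprn_gt0.
- by move=> N hN Ns; apply: Mmax; apply/andP.
Qed.
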